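(* Let $\mathcal{G}$ be a causal diagram with action $X\in\mathbf{O}$ and latent reward $Y\in\mathbf{L}$ that is a descendant of $X$, let $\Pi$ be a policy space over $X$, and let $\mathbf{Z}=\mathrm{An}(Y)_{\mathcal{G}}\cap\mathrm{Pa}(\Pi)$. If $P(y)$ is imitable with respect to $\langle\mathcal{G},\Pi\rangle$, then $(Y\perp\!\!\!\perp X\mid\mathbf{Z})_{\mathcal{G}_{\underline{X}}}$.
   Context: A structural causal model (SCM) $M = \langle \mathbf{U}, \mathbf{V}, \mathcal{F}, P(\mathbf{u})\rangle$ has exogenous variables $\mathbf{U}$ drawn from $P(\mathbf{u})$, endogenous variables $\mathbf{V}$, and for each $V$ a function $V\leftarrow f_V(\mathrm{Pa}_V,U_V)$. A POSCM is $\langle M,\mathbf{O},\mathbf{L}\rangle$ with $\mathbf{O},\mathbf{L}$ a partition of $\mathbf{V}$ into observed and latent variables; $P(\mathbf{o})$ is the observational distribution. The causal diagram $\mathcal{G}$ has an arrow $V_j\to V_i$ when $V_j\in\mathrm{Pa}_{V_i}$ and a bidirected arrow $V_i\leftrightarrow V_j$ when $U_{V_i}\cap U_{V_j}\ne\emptyset$; $\mathcal{M}_{\langle\mathcal{G}\rangle}$ is the class of POSCMs with diagram $\mathcal{G}$. $\mathrm{An}(Y)_{\mathcal{G}}$ is the set of ancestors of $Y$ (via directed paths) including $Y$. $\mathcal{G}_{\overline{X}}$ (resp. $\mathcal{G}_{\underline{X}}$) is $\mathcal{G}$ with arrows into (resp. out of) $X$ removed; d-separation is the standard criterion with bidirected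 arrows acting as latent common causes. A policy space $\Pi$ is determined by covariates $\mathrm{Pa}(\Pi)\subseteq\mathbf{O}\setminus\mathrm{De}(X)_{\mathcal{G}_{\overline{X}}}$ and consists of all maps $\pi(x\mid\mathrm{pa}(\Pi))$ to distributions over $X$. $\mathrm{do}(\pi)$ replaces $f_X$ by drawing $X\sim\pi$: $P(\mathbf{v}\mid\mathrm{do}(\pi))=\sum_{\mathbf{u}}P(\mathbf{u})\prod_{V\ne X}P(v\mid\mathrm{pa}_V,u_V)\pi(x\mid\mathrm{pa}(\Pi))$. $P(y)$ is imitable w.r.t. $\langle\mathcal{G},\Pi\rangle$ if there is $\pi\in\Pi$ uniquely computable from $P(\mathbf{o})$ such that $P(y\mid\mathrm{do}(\pi);M)=P(y;M)$ for every $M\in\mathcal{M}_{\langle\mathcal{G}\rangle}$. *)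

From HB Require Import structures.
From mathcomp Require Import all_boot all_order all_algebra.
From mathcomp Require Import reals.
Set Implicit Arguments. Unset Strict Implicit. Unset Printing Implicit Defensive.
Import Order.TTheory GRing.Theory Num.Theory.
Local Open Scope ring_scope.

Section Graphs.
Variable n : nat.
(* A causal diagram on vertices 'I_n: dir j i means V_j -> V_i,
   bi i j means V_i <-> V_j. *)

Definition acyclic (dir : rel 'I_n) : Prop :=
  forall i j, dir i j -> ~~ connect dir j i.

(* G with arrows into X removed (G_{\overline X}) and out of X removed (G_{\underline X}) *)
Definition dir_over (dir : rel 'I_n) (X : 'I_n) : rel 'I_n :=
  fun a b => dir a b && (b != X).
Definition dir_under (dir : rel 'I_n) (X : 'I_n) : rel 'I_n :=
  fun a b => dir a b && (a != X).

Definition An (dir : rel 'I_n) (Y : 'I_n) : {set 'I_n} := [set i | connect dir i Y].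
Definition De (dir : rel 'I_n) (X : 'I_n) : {set 'I_n} := [set i | connect dir X i].

Inductive ekind := Fwd | Bwd | Bi .

Definition edge (dir bi : rel 'I_n) (k : ekind) (a b : 'I_n) : bool :=
  match k with Fwd => dir a b | Bwd => dir b a | Bi => bi a b end.

(* a path from a: sequence of steps (kind, next node) *)
Fixpoint is_path (dir bi : rel 'I_n) (a : 'I_n) (p : seq (ekind * 'I_n)) : bool :=
  match p with
  | [::] => true
  | (k, b) :: p' => edge dir bi k a b && is_path dir bi b p'
  end.

(* w is a collider when both adjacent edges have an arrowhead at w;
   k1 is the step arriving at w, k2 the step leaving w *)
Definition collider (k1 k2 : ekind) : bool :=
  match k1, k2 with
  | Bwd, _ => false
  | _, Fwd => false
  | _, _ => true
  end.

Definition blocking (dir : rel 'I_n) (C : {set 'I_n}) (k1 : ekind) (w : 'I_n)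
  (k2 : ekind) : bool :=
  if collider k1 k2 then ~~ [exists c in C, connect dir w c] else w \in C.

Fixpoint blocked_from (dir : rel 'I_n) (C : {set 'I_n}) (k1 : ekind) (w : 'I_n)
  (p : seq (ekind * 'I_n)) : bool :=
  match p with
  | [::] => false
  | (k2, b) :: p' => blocking dir C k1 w k2 || blocked_from dir C k2 b p'
  end.

(* some intermediate node of the path blocks it *)
Definition path_blocked (dir : rel 'I_n) (C : {set 'I_n}) (a : 'I_n)
  (p : seq (ekind * 'I_n)) : bool :=
  match p with
  | [::] => false
  | (k, b) :: p' => blocked_from dir C k b p'
  end.

Definition dsep (dir bi : rel 'I_n) (A B C : {set 'I_n}) : Prop :=
  forall (a b : 'I_n) (p : seq (ekind * 'I_n)),
    a \in A -> b \in B -> is_path dir bi a p -> uniq (a :: map snd p) ->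
    last a (map snd p) = b -> path_blocked dir C a p.

End Graphs.

Section SCM.
Variables (R : realType) (n m : nat) (T W : finType).
(* Endogenous variables 'I_n with values in T; exogenous variables 'I_m with values
   in W, mutually independent with marginals pu. *)
Record scm := SCM {
  pu : 'I_m -> W -> R;
  uset : 'I_n -> {set 'I_m};
  fv : 'I_n -> {ffun 'I_n -> T} -> {ffun 'I_m -> W} -> T
}.

Definition in_class (dir bi : rel 'I_n) (M : scm) : Prop :=
  [/\ (forall k w, 0 <= pu M k w),
      (forall k, \sum_(w : W) pu M k w = 1),
      (forall i (v v' : {ffun 'I_n -> T}) (u u' : {ffun 'I_m -> W}),
          (forall j, dir j i -> v j = v' j) ->
          (forall k, k \in uset M i -> u k = u' k) ->
          fv M i v u = fv M i v' u')
    & (forall i j, i != j -> bi i j = (uset M i :&: uset M j != set0))].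

Definition Pu (M : scm) (u : {ffun 'I_m -> W}) : R := \prod_(k < m) pu M k (u k).

Definition Pv (M : scm) (v : {ffun 'I_n -> T}) : R :=
  \sum_(u : {ffun 'I_m -> W}) Pu M u * \prod_(i < n) (v i == fv M i v u)%:R.

(* observational distribution P(o), as a function of the O-coordinates *)
Definition Po (O : {set 'I_n}) (M : scm) (o : {ffun 'I_n -> T}) : R :=
  \sum_(v : {ffun 'I_n -> T} | [forall i in O, v i == o i]) Pv M v.

Definition Py (M : scm) (Y : 'I_n) (y : T) : R :=
  \sum_(v : {ffun 'I_n -> T} | v Y == y) Pv M v.

(* a policy pi(x | pa(Pi)); pi v x only depends on v through Pa(Pi) *)
Definition policy := {ffun 'I_n -> T} -> T -> R.

Definition in_policy_space (PaPi : {set 'I_n}) (pi : policy) : Prop :=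
  [/\ (forall v v' : {ffun 'I_n -> T}, (forall i, i \in PaPi -> v i = v' i) ->
          forall x, pi v x = pi v' x),
      (forall (v : {ffun 'I_n -> T}) (x : T), 0 <= pi v x)
    & (forall v : {ffun 'I_n -> T}, \sum_(x : T) pi v x = 1)].

Definition Pv_do (M : scm) (X : 'I_n) (pi : policy) (v : {ffun 'I_n -> T}) : R :=
  \sum_(u : {ffun 'I_m -> W})
     Pu M u * (\prod_(i < n | i != X) (v i == fv M i v u)%:R) * pi v (v X).

Definition Py_do (M : scm) (X : 'I_n) (pi : policy) (Y : 'I_n) (y : T) : R :=
  \sum_(v : {ffun 'I_n -> T} | v Y == y) Pv_do M X pi v.

End SCM.

(* P(y) is imitable w.r.t. <G, Pi>: there is a policy in Pi computed from P(o) alone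
   (a map Phi from observational distributions to policies) that matches P(y) in
   every model of M_<G>.  The choice of Phi may depend on the value spaces. *)
Definition imitable (R : realType) (n : nat) (dir bi : rel 'I_n) (O : {set 'I_n})
  (X Y : 'I_n) (PaPi : {set 'I_n}) : Prop :=
  forall (T W : finType) (m : nat),
  exists Phi : ({ffun 'I_n -> T} -> R) -> policy R n T,
  forall M : scm R n m T W, in_class dir bi M ->
    in_policy_space PaPi (Phi (Po O M)) /\
    forall y : T, Py_do M X (Phi (Po O M)) Y y = Py M Y y.

From HB Require Import structures.
From mathcomp Require Import all_boot all_order all_algebra.
From mathcomp Require Import reals.
Set Implicit Arguments. Unset Strict Implicit. Unset Printing Implicit Defensive.
Import Order.TTheory GRing.Theory Num.Theory.

(* Contrapositive.  Given a path Y = v_0, ..., v_k = X of G with the arrows out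
   of X removed, open given Z = An(Y) ∩ Pa(Π), build a model of M_<G> with fair
   binary noise in which no policy of Π reproduces P(y).  Every edge of the path
   carries a coin: the private noise of its tail if it is directed, a noise
   shared by its endpoints if it is bidirected.  Each v_j computes the XOR of the
   coins of its (one or two) path edges; openness makes every v_j an ancestor
   of Y, so for j > 0 this parity can be relayed to Y along a directed path.
   Y raises an alarm equal to the XOR of all the parities.  Each coin enters it
   twice, so the alarm is never raised observationally.  Under do(π) the
   mechanism of X is removed, and flipping every coin together with the copies
   broadcast by the tails changes the parity of no vertex other than Y and X.
   No vertex of Pa(Π) is a tail of a path edge (by openness and
   Pa(Π) ⊆ O \ De(X)), so this flip preserves P(v | do(π)) and toggles the
   alarm, which therefore fires with probability 1/2. *)

Section PathIndexing.
Variables (n : nat) (a : 'I_n) (p : seq (ekind * 'I_n)).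

Definition node t := nth a (a :: map snd p) t.
Definition kind t := nth Bi (map fst p) t.

Definition edge_tail t : option 'I_n :=
  match kind t with Fwd => Some (node t) | Bwd => Some (node t.+1) | Bi => None end.

Definition path_tail w := [exists t : 'I_(size p), edge_tail t == Some w].

Lemma node_inj i j : uniq (a :: map snd p) -> i <= size p -> j <= size p ->
  (node i == node j) = (i == j).
Proof. by move=> uniq_p ip jp; rewrite /node nth_uniq //= size_map ltnS. Qed.

Lemma node_last : node (size p) = last a (map snd p).
Proof. by rewrite /node -(size_map snd) nth_last. Qed.

Lemma is_path_edge dir bi : is_path dir bi a p ->
  forall t, t < size p -> edge dir bi (kind t) (node t) (node t.+1).
Proof.
rewrite /kind /node; move: a {2 4}a; elim: p => [|[k b] q IH] c d //=.
case/andP=> e_cb path_q [|t] //= tq.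
by rewrite !(set_nth_default b) /= ?size_map ?(ltnW tq) //; apply: IH.
Qed.

Lemma unblocked_inner dir C : ~~ path_blocked dir C a p ->
  forall t, 0 < t < size p -> ~~ blocking dir C (kind t.-1) (node t) (kind t).
Proof.
rewrite /kind /node; case: p => [|[k0 b0] q] open_q [//|t] //= tq.
elim: q k0 b0 t tq open_q => [|[k b] q IH] k0 b0 [|t] //=; rewrite ?negb_or.
- by move=> _ /andP[].
- by move=> tq /andP[_]; apply: IH.
Qed.

End PathIndexing.

Section OpenPath.
Variables (n : nat) (dir bi : rel 'I_n) (X Y : 'I_n) (PaPi : {set 'I_n}).
Variable p : seq (ekind * 'I_n).
Local Notation k := (size p).
Local Notation node := (node Y p).
Local Notation kind := (kind p).
Local Notation C := (An dir Y :&: PaPi).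

Hypothesis path_p : is_path (dir_under dir X) bi Y p.
Hypothesis last_p : last Y (map snd p) = X.
Hypothesis open_p : ~~ path_blocked (dir_under dir X) C Y p.
Hypothesis anc_X : connect dir X Y.

Lemma path_edge t : t < k -> edge dir bi (kind t) (node t) (node t.+1).
Proof. by move/(is_path_edge path_p); case: (kind t) => //= /andP[]. Qed.

Lemma collider_anc t : 0 < t < k -> collider (kind t.-1) (kind t) ->
  connect dir (node t) Y.
Proof.
move=> tk col; move: (unblocked_inner open_p tk); rewrite /blocking col negbK.
case/existsP=> c /andP[]; rewrite !inE => /andP[cY _] tc.
apply: connect_trans cY; apply: connect_sub tc => x y /andP[xy _].
exact: connect1.
Qed.

Lemma anc_before_Bwd t : t < k -> kind t = Bwd -> connect dir (node t) Y.
Proof.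
elim: t => [|t IH] tk kt; first exact: connect0.
case col: (collider (kind t) (kind t.+1)); first by apply: collider_anc; rewrite ?tk.
have kt' : kind t = Bwd by move: col; rewrite kt; case: (kind t).
apply: connect_trans (IH (ltnW tk) kt'); apply: connect1.
by have := path_edge (ltnW tk); rewrite kt'.
Qed.

Lemma anc_after_Fwd t : t < k -> kind t = Fwd -> connect dir (node t.+1) Y.
Proof.
move=> tk; have [d] : exists d, k = t.+1 + d by exists (k - t.+1); rewrite subnKC.
elim: d t tk => [|d IH] t tk kd kt.
  by rewrite -[t.+1]addn0 -kd node_last last_p.
have t1k : t.+1 < k by rewrite kd -addSnnS leq_addr.
case col: (collider (kind t) (kind t.+1)); first exact: collider_anc.
have kt' : kind t.+1 = Fwd by move: col; rewrite kt; case: (kind t.+1).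
apply: connect_trans (IH _ t1k _ kt'); last by rewrite kd !addSn addnS.
by apply: connect1; have := path_edge t1k; rewrite kt'.
Qed.

Lemma path_node_anc t : t <= k -> connect dir (node t) Y.
Proof.
case: (posnP t) => [-> _|t0]; first exact: connect0.
rewrite leq_eqVlt => /orP[/eqP->|tk]; first by rewrite node_last last_p.
case col: (collider (kind t.-1) (kind t)); first by apply: collider_anc; rewrite ?t0 ?tk.
have t1k : t.-1 < k by rewrite prednK // ltnW.
have [kt1|kt] : kind t.-1 = Bwd \/ kind t = Fwd.
  by move: col; case: (kind t.-1); case: (kind t); auto.
- apply: connect_trans (anc_before_Bwd t1k kt1); apply: connect1.
  by have := path_edge t1k; rewrite kt1 prednK.
- apply: connect_trans (anc_after_Fwd tk kt); apply: connect1.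
  by have := path_edge tk; rewrite kt.
Qed.

Lemma noncollider_notin_PaPi t : 0 < t < k -> ~~ collider (kind t.-1) (kind t) ->
  node t \notin PaPi.
Proof.
move=> /andP[t0 tk] col; have := unblocked_inner open_p (t := t).
rewrite t0 tk /blocking (negbTE col) in_setI /An inE => /(_ isT).
by rewrite path_node_anc ?(ltnW tk).
Qed.

Lemma PaPi_not_tail (O : {set 'I_n}) q : Y \notin O ->
  PaPi \subset O :\: De (dir_over dir X) X -> q \in PaPi -> ~~ path_tail Y p q.
Proof.
move=> YO PaPi_O qP; have := subsetP PaPi_O q qP; rewrite !inE => /andP[qDe qO].
apply/existsP=> -[t]; have tk := ltn_ord t; rewrite /edge_tail.
case kt: (kind t) => // /eqP[qt].
- case: (posnP t) => [t0|t0]; first by move: YO; rewrite -[Y]/(node 0) -t0 qt qO.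
  have tk' : 0 < t < k by rewrite t0.
  have col : ~~ collider (kind t.-1) (kind t) by rewrite kt; case: (kind t.-1).
  by move: (noncollider_notin_PaPi tk' col); rewrite qt qP.
- case: (ltnP t.+1 k) => t1k.
    have col : ~~ collider (kind t.+1.-1) (kind t.+1) by rewrite /= kt.
    by move: (noncollider_notin_PaPi (t := t.+1) t1k col); rewrite qt qP.
  by move: qDe; rewrite -qt (@anti_leq t.+1 k) ?tk // node_last last_p connect0.
Qed.

Lemma X_not_tail : uniq (Y :: map snd p) -> ~~ path_tail Y p X.
Proof.
move=> uniq_p; apply/existsP=> -[t]; have tk := ltn_ord t; rewrite /edge_tail.
case kt: (kind t) => // /eqP[Xt].
- move: Xt => /eqP; rewrite -last_p -node_last node_inj ?(ltnW tk) //.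
  by rewrite ltn_eqF.
- by have := is_path_edge path_p tk; rewrite kt /= /dir_under Xt eqxx andbF.
Qed.

Lemma route_exists : exists route : 'I_k.+1 -> seq 'I_n, forall j : 'I_k.+1,
  [/\ path dir (node j) (route j), last (node j) (route j) = Y
    & uniq (node j :: route j)].
Proof.
have route_j (j : 'I_k.+1) : exists r : seq 'I_n,
    [/\ path dir (node j) r, last (node j) r = Y & uniq (node j :: r)].
  move: (path_node_anc (ltn_ord j)); set x := node j.
  case/connectP=> q path_q ->.
  by case: (shortenP path_q) => r path_r uniq_r _; exists r.
exact: fin_all_exists route_j.
Qed.

End OpenPath.

Lemma telescope_addb (k : nat) (b : nat -> bool) :
  \big[addb/false]_(t < k.+1) (((0 < t) && b t.-1) (+) ((t < k) && b t)) = false.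
Proof.
rewrite big_split /= big_ord_recl big_ord_recr /= ltnn andFb addbF.
under [X in _ (+) X]eq_bigr do rewrite ltn_ord.
by rewrite addbb.
Qed.

Lemma sum_fibers (V : nmodType) (I J : finType) (f : I -> J) (P : pred J)
  (F : I -> V) :
  (\sum_(j | P j) \sum_(i | f i == j) F i = \sum_(i | P (f i)) F i)%R.
Proof.
rewrite [RHS](partition_big f P) //=; apply: eq_bigr => j Pj; apply: eq_bigl => i.
by case: eqP => [->|]; rewrite ?Pj ?andbF.
Qed.

Section Witness.
Variables (n : nat) (dir bi : rel 'I_n) (X Y : 'I_n) (p : seq (ekind * 'I_n)).
Local Notation k := (size p).
Local Notation node := (node Y p).
Local Notation kind := (kind p).
Variable route : 'I_k.+1 -> seq 'I_n.

Definition Noise := ('I_n + 'I_n * 'I_n)%type.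
Local Notation m := #|{: Noise}|.

Definition own i : 'I_m := enum_rank (inl i : Noise).
Definition shared a b : 'I_m := enum_rank (inr (a, b) : Noise).

Definition witness_uset i : {set 'I_m} :=
  [set c | match enum_val c with
           | inl j => j == i
           | inr (a, b) => bi a b && ((a == i) || (b == i)) end].

Lemma own_inj : injective own.
Proof. by move=> a b /enum_rank_inj []. Qed.

Lemma own_shared a b c : (own a == shared b c) = false.
Proof. by apply/negbTE/eqP => /enum_rank_inj. Qed.

Lemma mem_uset_own i j : (own j \in witness_uset i) = (j == i).
Proof. by rewrite inE enum_rankK. Qed.

Lemma mem_uset_shared i a b :
  (shared a b \in witness_uset i) = bi a b && ((a == i) || (b == i)).
Proof. by rewrite inE enum_rankK. Qed.

Hypothesis bi_sym : forall i j, bi i j = bi j i.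

Lemma witness_uset_bi i j : i != j ->
  bi i j = (witness_uset i :&: witness_uset j != set0).
Proof.
move=> ij; apply/idP/set0Pn => [bij|[c]].
  by exists (shared i j); rewrite inE !mem_uset_shared bij !eqxx orbT.
rewrite !inE; case: (enum_val c) => [l|[a b]].
  by case/andP=> /eqP li /eqP lj; move: ij; rewrite -li -lj eqxx.
case/andP=> /andP[bab ai] /andP[_ bj].
case/orP: ai => /eqP ai; case/orP: bj => /eqP bj; subst => //;
  first [by rewrite eqxx in ij | by rewrite bi_sym].
Qed.

(* A value is (copy of the own noise bit, alarm bit, relay channels indexed by
   the positions on the path). *)
Definition Val := (bool * bool * {ffun 'I_k.+1 -> bool})%type.
Definition Config := {ffun 'I_n -> Val}.
Definition Noises := {ffun 'I_m -> bool}.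

Definition edge_noise t : 'I_m :=
  if edge_tail Y p t is Some w then own w else shared (node t) (node t.+1).

(* The head of a directed edge reads its coin from the copy broadcast by the
   tail, so that every mechanism uses only parents and its own noise. *)
Definition view_right t (v : Config) (u : Noises) : bool :=
  if kind t is Fwd then (v (node t)).1.1 else u (edge_noise t).
Definition view_left t (v : Config) (u : Noises) : bool :=
  if kind t is Bwd then (v (node t.+1)).1.1 else u (edge_noise t).

Definition parity t (v : Config) (u : Noises) :=
  ((0 < t) && view_right t.-1 v u) (+) ((t < k) && view_left t v u).
Definition noise_parity t (u : Noises) :=
  ((0 < t) && u (edge_noise t.-1)) (+) ((t < k) && u (edge_noise t)).

Definition route_pred (j : 'I_k.+1) w := nth Y (node j :: route j) (index w (route j)).
Definition relay (j : 'I_k.+1) i (v : Config) := (i \in route j) && (v (route_pred j i)).2 j.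
Definition channel (j : 'I_k.+1) i v u :=
  (0 < j) && (if i == node j then parity j v u else relay j i v).
Definition alarm v u :=
  parity 0 v u (+) \big[addb/false]_(j : 'I_k.+1 | 0 < j) relay j Y v.

Definition mech i (v : Config) (u : Noises) : Val :=
  (u (own i), (i == Y) && alarm v u, [ffun j => channel j i v u]).

Definition solution (v : Config) (u : Noises) := forall i, v i = mech i v u.

Lemma parity_solution t v u : solution v u -> parity t v u = noise_parity t u.
Proof.
move=> sol; have own_v w : (v w).1.1 = u (own w) by rewrite sol.
rewrite /parity /noise_parity /view_right /view_left /edge_noise /edge_tail.
by case: (kind t.-1); case: (kind t); rewrite ?own_v.
Qed.

Hypothesis uniq_p : uniq (Y :: map snd p).
Hypothesis route_p : forall j : 'I_k.+1,
  [/\ path dir (node j) (route j), last (node j) (route j) = Y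
    & uniq (node j :: route j)].

Lemma Y_in_route (j : 'I_k.+1) : 0 < j -> Y \in route j.
Proof.
move=> j0; have [_ last_j _] := route_p j.
have jk : j <= k := ltn_ord j.
have jY : node j != Y by rewrite -[X in _ != X]/(node 0) node_inj // -lt0n.
by move: (mem_last (node j) (route j)); rewrite last_j inE eq_sym (negbTE jY).
Qed.

Lemma channel_along_route v u (j : 'I_k.+1) q : solution v u -> 0 < j ->
  q <= size (route j) -> (v (nth Y (node j :: route j) q)).2 j = noise_parity j u.
Proof.
move=> sol j0; have [_ _ /andP[nj uniq_r]] := route_p j.
elim: q => [|q IH] qj; rewrite sol ffunE /channel j0 /=.
  by rewrite eqxx parity_solution.
have wj : nth Y (route j) q \in route j by rewrite mem_nth.
have -> : (nth Y (route j) q == node j) = false by apply: contraNF nj => /eqP <-.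
by rewrite /relay wj /route_pred index_uniq // IH // ltnW.
Qed.

Lemma noise_parity_sum u : \big[addb/false]_(t < k.+1) noise_parity t u = false.
Proof. exact: (telescope_addb k (fun t => u (edge_noise t))). Qed.

Lemma alarm_solution v u : solution v u -> (v Y).1.2 = false.
Proof.
move=> sol; rewrite sol /= eqxx /= /alarm parity_solution //.
under eq_bigr => j j0.
  rewrite /relay Y_in_route // /route_pred (channel_along_route sol j0) ?index_size //.
  over.
rewrite -[RHS](noise_parity_sum u) [RHS](bigD1 ord0) //=.
by congr (_ (+) _); apply: eq_bigl => j; rewrite lt0n.
Qed.

Definition config0 : Config := [ffun=> (false, false, [ffun=> false])].

Lemma parity0 t : parity t config0 [ffun=> false] = false.
Proof.
by rewrite /parity /view_right /view_left; case: (kind _); case: (kind _);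
  rewrite !ffunE !andbF.
Qed.

Lemma solution0 : solution config0 [ffun=> false].
Proof.
have relay0 j i : relay j i config0 = false by rewrite /relay ffunE /= ffunE andbF.
move=> i; rewrite ffunE /mech /alarm parity0 big1 => [|j _]; last exact: relay0.
rewrite ffunE addbF andbF; congr (_, _, _).
by apply/ffunP => j; rewrite !ffunE /channel parity0 relay0 if_same andbF.
Qed.

Definition flipped c := [exists t : 'I_k, c == edge_noise t].
Definition flip_noise (u : Noises) : Noises := [ffun c => u c (+) flipped c].
Definition flip_val i (x : Val) : Val :=
  (x.1.1 (+) flipped (own i), x.1.2 (+) (i == Y), x.2).
Definition flip_config (v : Config) : Config := [ffun i => flip_val i (v i)].

Lemma flip_noiseK : involutive flip_noise.
Proof. by move=> u; apply/ffunP => c; rewrite !ffunE addbK. Qed.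

Lemma flip_valK i : involutive (flip_val i).
Proof. by case=> [[a b] c]; rewrite /flip_val /= !addbK. Qed.

Lemma flip_configK : involutive flip_config.
Proof. by move=> v; apply/ffunP => i; rewrite !ffunE flip_valK. Qed.

Lemma flipped_own w : flipped (own w) = path_tail Y p w.
Proof.
apply: eq_existsb => t; rewrite /edge_noise.
by case: (edge_tail Y p t) => [a|]; rewrite ?(inj_eq own_inj) ?own_shared // eq_sym.
Qed.

Lemma flipped_edge_noise t : t < k -> flipped (edge_noise t).
Proof. by move=> tk; apply/existsP; exists (Ordinal tk). Qed.

Lemma view_right_flip t v u : t < k ->
  view_right t (flip_config v) (flip_noise u) = ~~ view_right t v u.
Proof.
move=> tk; have := flipped_edge_noise tk.
rewrite /view_right /edge_noise /edge_tail.
by case: (kind t) => fl; rewrite !ffunE /= fl addbT.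
Qed.

Lemma view_left_flip t v u : t < k ->
  view_left t (flip_config v) (flip_noise u) = ~~ view_left t v u.
Proof.
move=> tk; have := flipped_edge_noise tk.
rewrite /view_left /edge_noise /edge_tail.
by case: (kind t) => fl; rewrite !ffunE /= fl addbT.
Qed.

Lemma parity_flip t v u : t <= k ->
  parity t (flip_config v) (flip_noise u) = parity t v u (+) (0 < t) (+) (t < k).
Proof.
move=> tk.
have flip_r : (0 < t) && view_right t.-1 (flip_config v) (flip_noise u) =
              ((0 < t) && view_right t.-1 v u) (+) (0 < t).
  by case: (posnP t) => [->//|t0]; rewrite view_right_flip ?prednK // addbT.
have flip_l : (t < k) && view_left t (flip_config v) (flip_noise u) =
              ((t < k) && view_left t v u) (+) (t < k).
  by case tk': (t < k); rewrite //= view_left_flip // addbT.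
by rewrite /parity flip_r flip_l addbACA addbA.
Qed.

Hypothesis last_p : last Y (map snd p) = X.
Hypothesis XY : X != Y.

Lemma size_path_gt0 : 0 < k.
Proof. by move: XY; rewrite -last_p; case: p => //=; rewrite eqxx. Qed.

Lemma relay_flip j i v : relay j i (flip_config v) = relay j i v.
Proof. by rewrite /relay ffunE. Qed.

Lemma alarm_flip v u : alarm (flip_config v) (flip_noise u) = ~~ alarm v u.
Proof.
rewrite /alarm parity_flip // size_path_gt0 addbT ltnn addbF -addNb.
by under eq_bigr do rewrite relay_flip.
Qed.

Lemma mech_flip i v u : i != X ->
  mech i (flip_config v) (flip_noise u) = flip_val i (mech i v u).
Proof.
move=> iX; rewrite /mech /flip_val /= ffunE alarm_flip; congr (_, _, _).
  by case: (i == Y); rewrite ?addbT.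
apply/ffunP => j; rewrite !ffunE /channel relay_flip.
case: (posnP j) => [//|j0]; case: ifP => // /eqP ij.
have jk : j < k.
  rewrite ltn_neqAle -ltnS ltn_ord andbT; apply: contra_neq iX => jk.
  by rewrite ij jk node_last last_p.
by rewrite parity_flip ?(ltnW jk) // j0 jk addbK.
Qed.

Hypothesis edge_p : forall t, t < k -> edge dir bi (kind t) (node t) (node t.+1).

Lemma parity_local t (v v' : Config) (u u' : Noises) : t <= k ->
  (forall w, dir w (node t) -> v w = v' w) ->
  (forall c, c \in witness_uset (node t) -> u c = u' c) ->
  parity t v u = parity t v' u'.
Proof.
move=> tk eqv equ; rewrite /parity; congr (_ (+) _).
  case: (posnP t) => [->//|t0] /=; have t1k : t.-1 < k by rewrite prednK.
  move: (edge_p t1k); rewrite /view_right /edge_noise /edge_tail prednK //.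
  case: (kind t.-1) => /= e.
  - by rewrite eqv.
  - by rewrite equ // mem_uset_own.
  - by rewrite equ // mem_uset_shared e eqxx orbT.
case: (ltnP t k) => //= t1k.
move: (edge_p t1k); rewrite /view_left /edge_noise /edge_tail.
case: (kind t) => /= e.
- by rewrite equ // mem_uset_own.
- by rewrite eqv.
- by rewrite equ // mem_uset_shared e eqxx.
Qed.

Lemma route_pred_edge j i : i \in route j -> dir (route_pred j i) i.
Proof.
move=> ij; have [/(pathP Y) path_j _ _] := route_p j.
by move: (path_j (index i (route j))); rewrite index_mem nth_index // => ->.
Qed.

Lemma relay_local j i (v v' : Config) : (forall w, dir w i -> v w = v' w) ->
  relay j i v = relay j i v'.
Proof.
move=> eqv; rewrite /relay; case ij: (i \in route j) => //=.
by rewrite eqv ?route_pred_edge.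
Qed.

Lemma mech_local i (v v' : Config) (u u' : Noises) :
  (forall w, dir w i -> v w = v' w) ->
  (forall c, c \in witness_uset i -> u c = u' c) -> mech i v u = mech i v' u'.
Proof.
move=> eqv equ; rewrite /mech; congr (_, _, _).
- by rewrite equ // mem_uset_own.
- case: eqP => [iY|//] /=; rewrite /alarm (@parity_local 0 v v' u u') -?iY //.
  by congr (_ (+) _); apply: eq_bigr => j _; apply: relay_local.
- apply/ffunP => j; rewrite !ffunE /channel (relay_local _ eqv).
  case: ifP => [/eqP ij|//]; congr (_ && _).
  by apply: parity_local (ltn_ord j) _ _; rewrite -ij.
Qed.

Definition witness (R : realType) : scm R n m Val bool :=
  SCM (fun _ _ => 2^-1)%R witness_uset mech.

Lemma witness_in_class (R : realType) : in_class dir bi (witness R).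
Proof.
split => //=.
- by move=> _ _; rewrite invr_ge0 ler0n.
- by move=> _; rewrite big_bool /= -div1r -splitr.
- by move=> i v v' u u'; apply: mech_local.
- exact: witness_uset_bi.
Qed.

Section Imitation.
Variables (R : realType) (PaPi : {set 'I_n}) (pi : policy R n Val).
Hypothesis pi_in : in_policy_space PaPi pi.
Hypothesis PaPi_no_tail : forall q, q \in PaPi -> ~~ path_tail Y p q.
Hypothesis Y_notin_PaPi : Y \notin PaPi.
Hypothesis X_no_tail : ~~ path_tail Y p X.
Local Notation M := (witness R).
Local Open Scope ring_scope.

Lemma Pu_witness_gt0 u : 0 < Pu M u.
Proof. by apply: prodr_gt0 => c _; rewrite invr_gt0 ltr0n. Qed.

Lemma Pv_summand_ge0 (v : Config) u : 0 <= Pu M u * \prod_(i < n) (v i == fv M i v u)%:R.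
Proof.
apply: mulr_ge0; first exact: ltW (Pu_witness_gt0 u).
by apply: prodr_ge0 => i _; apply: ler0n.
Qed.

Lemma Pv_alarm (v : Config) : (v Y).1.2 -> Pv M v = 0.
Proof.
move=> alarm_v; apply: big1 => u _.
case: (boolP [forall i, v i == mech i v u]) => [/forallP sol|].
  by move: alarm_v; rewrite (alarm_solution (fun i => eqP (sol i))).
rewrite negb_forall => /existsP[i /negbTE vi].
by rewrite (bigD1 i) //= vi mul0r mulr0.
Qed.

Lemma Pv_config0_gt0 : 0 < Pv M config0.
Proof.
rewrite /Pv (bigD1 [ffun=> false]) //= ltr_wpDr ?sumr_ge0 // => [u _|].
  exact: Pv_summand_ge0.
by rewrite big1 ?mulr1 ?Pu_witness_gt0 // => i _; rewrite /= -solution0 eqxx.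
Qed.

Lemma sum_Py_witness_gt0 : 0 < \sum_y Py M Y y.
Proof.
rewrite /Py (sum_fibers (fun v : Config => v Y) predT) (bigD1 config0) //=.
by rewrite ltr_wpDr ?Pv_config0_gt0 ?sumr_ge0 // => v _; apply: sumr_ge0 => u _;
  apply: Pv_summand_ge0.
Qed.

Lemma flip_val_id i x : ~~ path_tail Y p i -> i != Y -> flip_val i x = x.
Proof.
move=> /negbTE ti /negbTE iY; case: x => [[a b] c].
by rewrite /flip_val flipped_own ti iY !addbF.
Qed.

Lemma Pv_do_flip (v : Config) : Pv_do M X pi (flip_config v) = Pv_do M X pi v.
Proof.
rewrite /Pv_do (reindex_inj (can_inj flip_noiseK)) /=; apply: eq_bigr => u _.
congr (_ * _ * _).
  apply: eq_bigr => i iX; rewrite ffunE mech_flip //.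
  by rewrite (inj_eq (can_inj (flip_valK i))).
have fixed w : ~~ path_tail Y p w -> w != Y -> flip_config v w = v w.
  by move=> tw wY; rewrite ffunE flip_val_id.
case: pi_in => pi_local _ _; rewrite fixed //.
apply: pi_local => q qP; rewrite fixed ?PaPi_no_tail //.
by apply: contraNneq Y_notin_PaPi => <-.
Qed.

Lemma witness_not_imitated : ~ (forall y, Py_do M X pi Y y = Py M Y y).
Proof.
move=> imit.
have alarm_mass0 : \sum_(v : Config | (v Y).1.2) Pv_do M X pi v = 0.
  rewrite -(sum_fibers (fun v : Config => v Y) (fun y : Val => y.1.2)).
  apply: big1 => y y2; rewrite -[LHS]/(Py_do M X pi Y y) imit.
  by apply: big1 => v /eqP vY; apply: Pv_alarm; rewrite vY.
have alarm_sym : \sum_(v : Config | ~~ (v Y).1.2) Pv_do M X pi v =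
                 \sum_(v : Config | (v Y).1.2) Pv_do M X pi v.
  rewrite (reindex_inj (can_inj flip_configK)) /=; apply: eq_big => v.
    by rewrite ffunE /flip_val /= eqxx addbT negbK.
  by move=> _; apply: Pv_do_flip.
have := sum_Py_witness_gt0.
rewrite (eq_bigr _ (fun y _ => esym (imit y))) /Py_do.
rewrite (sum_fibers (fun v : Config => v Y) predT) (bigID (fun v : Config => (v Y).1.2)) /=.
by rewrite alarm_sym alarm_mass0 addr0 ltxx.
Qed.

End Imitation.

End Witness.


Theorem lemma5 (R : realType) (n : nat) (dir bi : rel 'I_n)
  (O : {set 'I_n}) (X Y : 'I_n) (PaPi : {set 'I_n}) :
  acyclic dir ->
  (forall i j, bi i j = bi j i) -> (forall i, ~~ bi i i) ->
  X \in O -> Y \notin O ->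
  connect dir X Y ->
  PaPi \subset O :\: De (dir_over dir X) X ->
  imitable R dir bi O X Y PaPi ->
  dsep (dir_under dir X) bi [set Y] [set X] (An dir Y :&: PaPi).
Proof.
move=> _ bi_sym _ XO YO anc_X PaPi_O imit a b p.
rewrite !inE => /eqP -> /eqP -> path_p uniq_p last_p; apply/negPn/negP => open_p.
have XY : X != Y by apply: contraNneq YO => <-.
have [route route_p] := route_exists path_p last_p open_p anc_X.
have [Phi Phi_ok] := imit (Val p) bool #|{: Noise n}|.
have [pi_in imitates] :=
  Phi_ok _ (witness_in_class bi_sym route_p (path_edge path_p) R).
have PaPi_tail q : q \in PaPi -> ~~ path_tail Y p q.
  exact: (PaPi_not_tail path_p last_p open_p anc_X YO PaPi_O).
have Y_PaPi : Y \notin PaPi by apply: contraNN YO => /(subsetP PaPi_O) /setDP[].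
exact: (witness_not_imitated uniq_p route_p last_p XY pi_in PaPi_tail Y_PaPi
  (X_not_tail path_p last_p uniq_p) imitates).
Qed.
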